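(* Let $G=(V,E)$ be a finite simple graph with at least one vertex and $k>0$ an integer. Let $\mathcal F$ be the set of all sets $\{(A_1,B_1),(A_2,B_2),(A_3,B_3)\}\subseteq\vec S_k$ (the three elements not necessarily distinct) with $G[A_1]\cup G[A_2]\cup G[A_3]=G$, and let $\mathcal F^*\subseteq\mathcal F$ be the set of those elements of $\mathcal F$ that are stars. Then every consistent orientation of $S_k$ that avoids $\mathcal F^*$ also avoids $\mathcal F$.
   Context: An oriented vertex separation of $G$ is an ordered pair $(A,B)$ with $A\cup B=V$ and no edge of $G$ between $A\setminus B$ and $B\setminus A$. These are partially ordered by $(A,B)\le(C,D)$ iff $A\subseteq C$ and $B\supseteq D$, with involution $(A,B)^*=(B,A)$. $\vec S_k$ is the set of oriented vertex separations $(A,B)$ with $|A\cap B|<k$, and $S_k$ the set of unordered pairs $\{(A,B),(B,A)\}$ with $(A,B)\in\vec S_k$. An orientation of $S_k$ is a set $O\subseteq\vec S_k$ containing exactly one of $(A,B),(B,A)$ for each such pair. $O$ is consistent if there are no distinct separations $r,s\in S_k$ with orientations $\vec r<\vec s$ such that $\vec r^{\,*},\vec s\in O$. A star is a nonempty set $\sigma$ of oriented separations with $\vec r\le\vec s^{\,*}$ for all distinct $\vec r,\vec s\in\sigma$. $O$ avoids a family $\mathcal F$ if no subset of $O$ lies in $\mathcal F$. $G[A]$ denotes the induced subgraph. *)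

From mathcomp Require Import all_boot.
Set Implicit Arguments. Unset Strict Implicit. Unset Printing Implicit Defensive.

(* A graph on a finite vertex type V is given by an edge relation e : rel V
   (simple: symmetric and irreflexive, assumed in the theorem). *)
Definition sep (V : finType) := ({set V} * {set V})%type.

Definition swap (V : finType) (p : sep V) : sep V := (p.2, p.1).

Definition is_sep (V : finType) (e : rel V) (p : sep V) : bool :=
  (p.1 :|: p.2 == setT) &&
  [forall x, forall y, ((x \in p.1 :\: p.2) && (y \in p.2 :\: p.1)) ==> ~~ e x y].

Definition in_Sk (V : finType) (e : rel V) (k : nat) (p : sep V) : bool :=
  is_sep e p && (#|p.1 :&: p.2| < k).

Definition sep_le (V : finType) (p q : sep V) : bool :=
  (p.1 \subset q.1) && (q.2 \subset p.2).
Definition sep_lt (V : finType) (p q : sep V) : bool := sep_le p q && (p != q).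

Definition orientation (V : finType) (e : rel V) (k : nat) (O : {set sep V}) : Prop :=
  (forall p, p \in O -> in_Sk e k p) /\
  (forall p, in_Sk e k p ->
     ((p \in O) || (swap p \in O)) &&
     ((p != swap p) ==> ~~ ((p \in O) && (swap p \in O)))).

Definition consistent (V : finType) (e : rel V) (k : nat) (O : {set sep V}) : Prop :=
  forall r s : sep V, in_Sk e k r -> in_Sk e k s ->
    s != r -> s != swap r -> sep_lt r s ->
    ~ ((swap r \in O) && (s \in O)).

Definition star (V : finType) (sigma : {set sep V}) : Prop :=
  sigma != set0 /\
  (forall r s, r \in sigma -> s \in sigma -> r != s -> sep_le r (swap s)).

Definition famF (V : finType) (e : rel V) (k : nat) (X : {set sep V}) : Prop :=
  exists p1 p2 p3 : sep V,
    X = [set p1; p2; p3] /\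
    in_Sk e k p1 /\ in_Sk e k p2 /\ in_Sk e k p3 /\
    (forall v : V, (v \in p1.1) || (v \in p2.1) || (v \in p3.1)) /\
    (forall x y : V, e x y ->
       ((x \in p1.1) && (y \in p1.1)) || ((x \in p2.1) && (y \in p2.1)) ||
       ((x \in p3.1) && (y \in p3.1))).

Definition famFstar (V : finType) (e : rel V) (k : nat) (X : {set sep V}) : Prop :=
  famF e k X /\ star X.

Definition avoids (V : finType) (O : {set sep V}) (fam : {set sep V} -> Prop) : Prop :=
  forall X : {set sep V}, X \subset O -> ~ fam X.

From mathcomp Require Import all_boot.
Set Implicit Arguments. Unset Strict Implicit. Unset Printing Implicit Defensive.

(* Among the covers of G by at most three separations of O, take one of
   minimal total size sum (|A| + |V \ B|).  If it contains some (A,B) with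
   A = V, that separation alone is a star in F.  Otherwise, if the cover is
   not a star, it contains r = (A1,B1) and s = (A2,B2) with r not below s*.
   By submodularity of the order one of the two corners, say
   (A1 ∩ B2, B1 ∪ A2), has order at most |A1 ∩ B1| < k; it lies strictly
   below r, so consistency puts it in O, and replacing r by it gives a
   smaller cover, because the part of G[A1] it loses lies in G[A2]. *)

Lemma set3P (T : finType) (X : {set T}) :
  (exists a b c, X = [set a; b; c]) <-> 0 < #|X| <= 3.
Proof.
split=> [[a [b [c ->]]] | /andP[X_gt0 X_le3]].
  rewrite card_gt0; apply/andP; split.
    by apply/set0Pn; exists a; rewrite !inE eqxx.
  apply: (leq_trans (leq_card_setU _ _)); rewrite cards1 addn1 ltnS cardsU1 cards1.
  by case: (a \notin _).
have [a aX] : exists a, a \in X by apply/set0Pn; rewrite -card_gt0.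
rewrite -(setD1K aX); move: X_le3; rewrite (cardsD1 a) aX.
case Ea: #|X :\ a| => [|[|[|//]]] _.
- by exists a, a, a; rewrite (cards0_eq Ea) setU0 !setUid.
- by have /eqP/cards1P[b ->] := Ea; exists a, a, b; rewrite setUid.
- by have /eqP/cards2P[b [c [_ ->]]] := Ea; exists a, b, c; rewrite setUA.
Qed.

Lemma card_setU1D1 (T : finType) (A : {set T}) x y :
  x \in A -> 0 < #|y |: A :\ x| <= #|A|.
Proof.
move=> xA; rewrite card_gt0; apply/andP; split.
  by apply/set0Pn; exists y; exact: setU11.
by rewrite cardsU1 (cardsD1 x A) xA leq_add2r leq_b1.
Qed.

Lemma sum_setU1D1_lt (T : finType) (A : {set T}) x y (F : T -> nat) :
  x \in A -> F y < F x -> \sum_(z in y |: A :\ x) F z < \sum_(z in A) F z.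
Proof.
move=> xA lt_yx; rewrite (big_setD1 x xA) /=.
case: (boolP (y \in A :\ x)) => [yA | yA]; last by rewrite big_setU1 // ltn_add2r.
rewrite (setUidPr _) ?sub1set // -[X in X < _]add0n ltn_add2r.
exact: leq_ltn_trans lt_yx.
Qed.

Section Separations.
Variables (V : finType) (e : rel V).
Implicit Types (p q r s : sep V) (X : {set sep V}).

Definition sep_order p := #|p.1 :&: p.2|.

Definition sep_size p := #|p.1| + #|~: p.2|.

Definition corner p q : sep V := (p.1 :&: q.2, p.2 :|: q.1).

Definition covers X : Prop :=
  (forall v, exists2 p, p \in X & v \in p.1) /\
  (forall x y, e x y -> exists2 p, p \in X & (x \in p.1) && (y \in p.1)).

Lemma sep_le_swapC p q : sep_le p (swap q) = sep_le q (swap p).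
Proof. by rewrite /sep_le andbC. Qed.

Lemma sep_size_lt p q : sep_lt p q -> sep_size p < sep_size q.
Proof.
case/andP=> /andP[le1 le2] neq_pq; rewrite -setCS in le2.
have [le_size eq_size] := leqif_add (subset_leqif_cards le1) (subset_leqif_cards le2).
rewrite /sep_size ltn_neqAle le_size andbT eq_size.
apply: contra neq_pq => /andP[/eqP eq1 /eqP/setC_inj eq2].
by case: p q eq1 eq2 {le1 le2 le_size eq_size} => ? ? [? ?] /= -> ->.
Qed.

Lemma corner_le p q : sep_le (corner p q) p.
Proof. exact/andP/(conj (subsetIl _ _) (subsetUl _ _)). Qed.

Lemma corner_neq p q : ~~ sep_le p (swap q) -> corner p q != p.
Proof.
apply: contra => /eqP cpq; rewrite /sep_le -[in p.1 \subset _]cpq -[in _ \subset p.2]cpq.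
exact/andP/(conj (subsetIr _ _) (subsetUr _ _)).
Qed.

Lemma swap_corner_neq p q : ~~ (p.2 \subset p.1) -> p != swap (corner p q).
Proof. by apply: contra => /eqP pc; rewrite {1}pc subsetIl. Qed.

Lemma star_set1 p : star [set p].
Proof.
split; first by apply/set0Pn; exists p; exact: set11.
by move=> r s /set1P-> /set1P->; rewrite eqxx.
Qed.

Lemma starVwitness X : X != set0 ->
  star X \/ exists r s, [/\ r \in X, s \in X, r != s & ~~ sep_le r (swap s)].
Proof.
move=> X0; case: (boolP [forall r in X, forall s in X, (r != s) ==> sep_le r (swap s)]).
  move/forall_inP=> starX; left; split=> // r s rX sX rs.
  by move/forall_inP: (starX r rX) => /(_ s sX); rewrite rs.
move/forall_inPn=> [r rX /forall_inPn[s sX]]; rewrite negb_imply => /andP[rs nle].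
by right; exists r, s.
Qed.

Lemma sep_order_corners p q : p.1 :|: p.2 = setT -> q.1 :|: q.2 = setT ->
  sep_order (corner p q) + sep_order (corner q p) <= sep_order p + sep_order q.
Proof.
move=> /setP Up /setP Uq; rewrite /sep_order -cardsUI -[leqRHS]cardsUI.
apply: leq_add; apply: subset_leq_card; apply/subsetP => v;
move: (Up v) (Uq v); rewrite !inE;
by case: (v \in p.1); case: (v \in p.2); case: (v \in q.1); case: (v \in q.2).
Qed.

Lemma sep_full p : is_sep e p -> p.2 \subset p.1 -> forall v, v \in p.1.
Proof.
move=> /andP[/eqP/setP Up _] sub v; move: (Up v); rewrite !inE.
by case: (boolP (v \in p.2)) => [/(subsetP sub) | _]; rewrite ?orbF.
Qed.

Lemma corner_cover_vertex r s v :
  is_sep e s -> v \in r.1 -> (v \in (corner r s).1) || (v \in s.1).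
Proof.
move=> /andP[/eqP/setP Us _] vr; move: (Us v); rewrite !inE vr /=.
by case: (v \in s.1); case: (v \in s.2).
Qed.

Hypothesis e_sym : symmetric e.

Lemma is_sep_corner p q : is_sep e p -> is_sep e q -> is_sep e (corner p q).
Proof.
move=> /andP[/eqP/setP Up /forallP Fp] /andP[/eqP/setP Uq /forallP Fq].
apply/andP; split.
  apply/eqP/setP => v; move: (Up v) (Uq v); rewrite !inE.
  by case: (v \in p.1); case: (v \in p.2); case: (v \in q.1); case: (v \in q.2).
apply/forallP => x; apply/forallP => y; apply/implyP.
move/forallP: (Fp x) => /(_ y); move/forallP: (Fq y) => /(_ x).
move: (Uq x) (Up y) (Uq y); rewrite !inE /= (e_sym y x).
by case: (x \in p.1); case: (x \in p.2); case: (x \in q.1); case: (x \in q.2);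
   case: (y \in p.1); case: (y \in p.2); case: (y \in q.1); case: (y \in q.2);
   case: (e x y).
Qed.

Lemma corner_cover_edge r s x y : is_sep e s -> e x y -> x \in r.1 -> y \in r.1 ->
  (x \in (corner r s).1) && (y \in (corner r s).1) || (x \in s.1) && (y \in s.1).
Proof.
move=> /andP[/eqP/setP Us /forallP Fs] exy xr yr.
move/forallP: (Fs x) => /(_ y); move/forallP: (Fs y) => /(_ x).
move: (Us x) (Us y); rewrite !inE /= xr yr (e_sym y x) exy.
by case: (x \in s.1); case: (x \in s.2); case: (y \in s.1); case: (y \in s.2).
Qed.

Lemma covers_set1 p : is_sep e p -> p.2 \subset p.1 -> covers [set p].
Proof.
move=> sp sub; have full := sep_full sp sub.
by split=> [v | x y _]; exists p; rewrite ?set11 ?full.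
Qed.

Lemma covers_corner X r s : is_sep e s -> r \in X -> s \in X -> r != s ->
  covers X -> covers (corner r s |: X :\ r).
Proof.
move=> sS rX sX rs [cover_v cover_e].
have cX' : corner r s \in corner r s |: X :\ r by exact: setU11.
have keep p : p \in X -> p != r -> p \in corner r s |: X :\ r.
  by move=> pX pr; rewrite !inE pr pX orbT.
have sX' : s \in corner r s |: X :\ r by rewrite keep // eq_sym.
split=> [v | x y exy].
  have [p pX vp] := cover_v v.
  case: (eqVneq p r) => [prr | pr]; last by exists p; rewrite ?keep.
  subst p; case/orP: (corner_cover_vertex sS vp) => vc; first by exists (corner r s).
  by exists s.
have [p pX /andP[xp yp]] := cover_e x y exy.
case: (eqVneq p r) => [prr | pr]; last by exists p; rewrite ?keep ?xp.
subst p; case/orP: (corner_cover_edge sS exy xp yp) => xyc; first by exists (corner r s).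
by exists s.
Qed.

Variables (k : nat) (O : {set sep V}).
Hypotheses (O_orient : orientation e k O) (O_consistent : consistent e k O).

Lemma orientation_is_sep p : p \in O -> is_sep e p.
Proof. by move/O_orient.1/andP=> []. Qed.

Lemma orientation_down p q :
  p \in O -> in_Sk e k q -> sep_lt q p -> p != swap q -> q \in O.
Proof.
move=> pO qS lt_qp p_swapq; have /andP[le_qp neq_qp] := lt_qp.
case/andP: (O_orient.2 q qS) => /orP[// | swapqO] _; exfalso.
apply: (O_consistent qS (O_orient.1 p pO)) => //; first by rewrite eq_sym.
by rewrite swapqO pO.
Qed.

Lemma corner_in_orientation r s : r \in O -> s \in O ->
  ~~ sep_le r (swap s) -> ~~ (r.2 \subset r.1) ->
  sep_order (corner r s) <= sep_order r -> corner r s \in O.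
Proof.
move=> rO sO nle ndeg le_order; apply: (orientation_down rO).
- have /andP[_ lt_k] := O_orient.1 r rO.
  by rewrite /in_Sk is_sep_corner ?orientation_is_sep //; exact: leq_ltn_trans lt_k.
- by rewrite /sep_lt corner_le corner_neq.
- exact: swap_corner_neq.
Qed.

Lemma sep_order_cornerV r s : r \in O -> s \in O ->
  sep_order (corner r s) <= sep_order r \/ sep_order (corner s r) <= sep_order s.
Proof.
move=> /orientation_is_sep/andP[/eqP Ur _] /orientation_is_sep/andP[/eqP Us _].
have := sep_order_corners Ur Us.
case: (leqP (sep_order (corner r s)) (sep_order r)) => [|lt_r le_sum]; first by left.
right; rewrite -(leq_add2l (sep_order r)); apply: leq_trans le_sum.
by rewrite leq_add2r ltnW.
Qed.

Lemma star_cover_of_cover n X : X \subset O -> 0 < #|X| <= n -> covers X ->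
  exists Y : {set sep V}, [/\ Y \subset O, 0 < #|Y| <= n, covers Y & star Y].
Proof.
have [N] := ubnP (\sum_(p in X) sep_size p).
elim: N X => // N IH X /ltnSE le_size XO /andP[X_gt0 X_le] cX.
have inO := subsetP XO.
case: (boolP [exists p in X, p.2 \subset p.1]).
  case/exists_inP=> p pX sub.
  exists [set p]; split; last exact: star_set1.
  - by rewrite sub1set inO.
  - by rewrite cards1 (leq_trans X_gt0 X_le).
  - exact: covers_set1 (orientation_is_sep (inO p pX)) sub.
move/exists_inPn=> ndeg.
have X0 : X != set0 by rewrite -card_gt0.
have [starX | [r [s [rX sX rs nle]]]] := starVwitness X0.
  by exists X; rewrite X_gt0 X_le.
have shift r' s' : r' \in X -> s' \in X -> r' != s' -> ~~ sep_le r' (swap s') ->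
    sep_order (corner r' s') <= sep_order r' ->
    exists Y : {set sep V}, [/\ Y \subset O, 0 < #|Y| <= n, covers Y & star Y].
  move=> r'X s'X r's' nle' le_order.
  have cO := corner_in_orientation (inO r' r'X) (inO s' s'X) nle'
    (ndeg r' r'X) le_order.
  have /andP[X'_gt0 X'_le] := card_setU1D1 (corner r' s') r'X.
  apply: (IH (corner r' s' |: X :\ r')).
  - apply: leq_trans le_size; apply: sum_setU1D1_lt r'X _.
    by apply: sep_size_lt; rewrite /sep_lt corner_le corner_neq.
  - by apply/subsetP => p; rewrite !inE => /orP[/eqP-> // | /andP[_ /inO]].
  - by rewrite X'_gt0 (leq_trans X'_le X_le).
  - exact: covers_corner (orientation_is_sep (inO s' s'X)) r'X s'X r's' cX.
have [le_r | le_s] := sep_order_cornerV (inO r rX) (inO s sX).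
  exact: (shift r s rX sX rs nle le_r).
by apply: (shift s r sX rX _ _ le_s); rewrite 1?eq_sym // sep_le_swapC.
Qed.

End Separations.

Lemma famF_covers (V : finType) (e : rel V) (k : nat) (X : {set sep V}) :
  famF e k X <-> [/\ {subset X <= in_Sk e k}, 0 < #|X| <= 3 & covers e X].
Proof.
split.
  move=> [p1 [p2 [p3 [X3 [i1 [i2 [i3 [cover_v cover_e]]]]]]]].
  split; first by move=> p; rewrite X3 !inE => /orP[/orP[]|] /eqP->.
    by apply/set3P; exists p1, p2, p3.
  rewrite X3; split=> [v | x y /cover_e].
    by case/orP: (cover_v v) => [/orP[]|] vp;
      [exists p1 | exists p2 | exists p3]; rewrite ?inE ?eqxx ?orbT.
  by case/orP => [/orP[]|] xyp;
    [exists p1 | exists p2 | exists p3]; rewrite ?inE ?eqxx ?orbT.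
move=> [XS /set3P[p1 [p2 [p3 X3]]] [cover_v cover_e]].
have inX3 p : p \in X -> [\/ p = p1, p = p2 | p = p3].
  by rewrite X3 !inE => /orP[/orP[]|] /eqP->; [apply: Or31 | apply: Or32 | apply: Or33].
have p1X : p1 \in X by rewrite X3 !inE eqxx.
have p2X : p2 \in X by rewrite X3 !inE eqxx orbT.
have p3X : p3 \in X by rewrite X3 !inE eqxx orbT.
exists p1, p2, p3;
  do !split; [by [] | exact: XS p1X | exact: XS p2X | exact: XS p3X | |].
  by move=> v; have [p /inX3[] -> ->] := cover_v v; rewrite ?orbT.
by move=> x y /cover_e[p /inX3[] -> ->]; rewrite ?orbT.
Qed.

Theorem lemma5p2 (V : finType) (e : rel V) (k : nat)
  (Hsym : symmetric e) (Hirr : irreflexive e) (Hne : 0 < #|V|) (Hk : 0 < k)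
  (O : {set sep V}) :
  orientation e k O -> consistent e k O -> avoids O (famFstar e k) ->
  avoids O (famF e k).
Proof.
move=> O_orient O_consistent avoid_star X XO /famF_covers[_ X_card cX].
have [Y [YO Y_card cY starY]] :=
  star_cover_of_cover Hsym O_orient O_consistent XO X_card cX.
apply: (avoid_star Y YO); split=> //; apply/famF_covers; split=> // p /(subsetP YO).
exact: O_orient.1.
Qed.
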